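(* Let $f\in C^{1,1}_L(\mathbb{R}^2)$, let $\mathcal{Y}=\{y_1,y_2,y_3\}\subset\mathbb{R}^2$ be affinely independent with $\langle y_2-y_1,y_3-y_1\rangle<0$, and let $m$ be the affine function interpolating $f$ on $\mathcal{Y}$. Let $y_0\in\mathbb{R}^2$ have barycentric coordinates satisfying $\ell_2>0$, $\ell_3<0$, and $\ell_1\langle y_2-y_1,y_3-y_1\rangle-\ell_3\langle y_2-y_3,y_1-y_3\rangle<0$. Let $G=\sum_{i=0}^{3}\ell_iy_iy_i^T$ and $H^\star=P\begin{bmatrix}L&0\\0&-L\end{bmatrix}P^{-1}$ with $P=[\,y_2-y_0\ \ y_1-y_3\,]$. Then $$|m(y_0)-f(y_0)|\le\tfrac12\langle G,H^\star\rangle .$$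
   Context: Let $L>0$. $C^{1,1}_L(\mathbb{R}^2)$ denotes the set of differentiable $f:\mathbb{R}^2\to\mathbb{R}$ with $\|\nabla f(u_1)-\nabla f(u_2)\|\le L\|u_1-u_2\|$ for all $u_1,u_2$ (Euclidean norm). $m$ is the unique affine function with $m(y_i)=f(y_i)$, $i=1,2,3$. The barycentric coordinates of $y_0$ w.r.t. $\mathcal{Y}$ are the unique reals $\ell_1,\ell_2,\ell_3$ with $\ell_1+\ell_2+\ell_3=1$ and $\ell_1y_1+\ell_2y_2+\ell_3y_3=y_0$; one sets $\ell_0=-1$. The matrix $P$ is invertible under these hypotheses. For matrices, $\langle A,B\rangle=\sum_{i,j}A_{ij}B_{ij}$ (here $H^\star$ need not be symmetric). *)

From HB Require Import structures.
From mathcomp Require Import all_boot all_order all_algebra.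
From mathcomp Require Import all_classical all_reals all_analysis.
Set Implicit Arguments. Unset Strict Implicit. Unset Printing Implicit Defensive.
Import Order.TTheory GRing.Theory Num.Theory.
Import numFieldNormedType.Exports.
Local Open Scope ring_scope.

Section Defs.
Variable R : realType.

Definition dotv (u v : 'cV[R]_2) : R := \sum_(i < 2) u i 0 * v i 0.
Definition enorm (u : 'cV[R]_2) : R := Num.sqrt (dotv u u).

Definition frob (A B : 'M[R]_2) : R := \sum_(i < 2) \sum_(j < 2) A i j * B i j.

Definition grad (f : 'cV[R]_2 -> R) (x : 'cV[R]_2) : 'cV[R]_2 :=
  \col_(i < 2) ('d f x (delta_mx i 0 : 'cV[R]_2)).

Definition C11 (L : R) (f : 'cV[R]_2 -> R) : Prop :=
  (forall x, differentiable f x) /\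
  (forall u1 u2, enorm (grad f u1 - grad f u2) <= L * enorm (u1 - u2)).

Definition aff_indep (y1 y2 y3 : 'cV[R]_2) : Prop :=
  forall a b : R, a *: (y2 - y1) + b *: (y3 - y1) = 0 -> a = 0 /\ b = 0.

Definition is_affine (m : 'cV[R]_2 -> R) : Prop :=
  exists (g : 'cV[R]_2) (c : R), forall x, m x = dotv g x + c.

Definition mx_cols (u v : 'cV[R]_2) : 'M[R]_2 :=
  \matrix_(i < 2, j < 2) (if j == 0 then u i 0 else v i 0).

Definition Gmx (l1 l2 l3 : R) (y0 y1 y2 y3 : 'cV[R]_2) : 'M[R]_2 :=
  (-1) *: (y0 *m y0^T) + l1 *: (y1 *m y1^T) + l2 *: (y2 *m y2^T)
  + l3 *: (y3 *m y3^T).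

Definition Hstar (L : R) (y0 y1 y2 y3 : 'cV[R]_2) : 'M[R]_2 :=
  let P := mx_cols (y2 - y0) (y1 - y3) in
  P *m (\matrix_(i < 2, j < 2) (if i == j then (if i == 0 then L else - L) else 0))
    *m invmx P.
End Defs.

From HB Require Import structures.
From mathcomp Require Import all_boot all_order all_algebra.
From mathcomp Require Import all_classical all_reals all_analysis.
Import Order.TTheory GRing.Theory Num.Theory.
Import numFieldNormedType.Exports.
From mathcomp Require Import ring lra.
Set Implicit Arguments. Unset Strict Implicit. Unset Printing Implicit Defensive.
Local Open Scope classical_set_scope.
Local Open Scope ring_scope.

(* Let z := (l1 y1 + l3 y3) / (l1 + l3) be the point where the line through
   y2 and y0 meets the line through y1 and y3.  Then y0 lies on [z, y2] at
   parameter l2 and y1 on [y3, z] at parameter t := (l1 + l3) / l1, so for every g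
     l1 g(y1) + l2 g(y2) + l3 g(y3) - g(y0) = gap_g(y2, z; l2) - l1 gap_g(z, y3; t),
   with gap_g(p, r; th) := th g(p) + (1 - th) g(r) - g(r + th (p - r)).
   For f in C^{1,1}_L each gap is at most L/2 th (1 - th) |p - r|^2 in absolute
   value, since f +- L/2 s^2 is convex along the segment.  For the quadratic form
   q(x) = x^T H* x the two gaps are exactly +L th (1 - th) |p - r|^2 and
   -L th (1 - th) |p - r|^2, because y2 - y0 and y1 - y3 are eigenvectors of H*
   for L and -L; and for q the left-hand side is <G, H*>.  The angle hypotheses only serve to make
   l1 + l3 > 0, i.e. t in [0, 1]. *)

Section RealLine.
Variable R : realType.
Implicit Types (M th : R) (g h : R -> R).

Lemma is_derive_half_sqr M (t : R) :
  is_derive t (1 : R) (fun x : R => M / 2 * (x * x)) (M * t).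
Proof.
have -> : (fun x : R => M / 2 * (x * x)) = (M / 2) \*: ((@id R) * (@id R)).
  by apply: funext.
by apply: is_derive_eq; rewrite [t%:A]mulr1 /GRing.scale /=; field.
Qed.

(* Two mean-value points c0 < th < c1 compare the two secant slopes. *)
Lemma nondecr_derive_le_conv h (dh : R -> R) th :
  (forall t : R, is_derive t (1 : R) h (dh t)) -> {homo dh : s t / s <= t} ->
  0 <= th <= 1 -> h th <= th * h 1 + (1 - th) * h 0.
Proof.
move=> hd dh_mono /andP[th0 th1].
have h_cont a b : {within `[a, b], continuous h}.
  by apply: derivable_within_continuous => x _; case: (hd x).
have [->|/eqP th0'] := eqVneq th 0; first lra.
have [->|/eqP th1'] := eqVneq th 1; first lra.
have lt0 : 0 < th by lra.
have lt1 : th < 1 by lra.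
have [c0 + e0] := MVT lt0 (fun x _ => hd x) (h_cont 0 th).
have [c1 + e1] := MVT lt1 (fun x _ => hd x) (h_cont th 1).
rewrite !in_itv /= => /andP[th_c1 _] /andP[_ c0_th].
have dc : 0 <= th * (1 - th) * (dh c1 - dh c0).
  apply: mulr_ge0; first by apply: mulr_ge0; lra.
  by rewrite subr_ge0 dh_mono // ltW // (lt_trans c0_th th_c1).
move: dc; have -> : th * (1 - th) * (dh c1 - dh c0)
        = th * (h 1 - h th) - (1 - th) * (h th - h 0) by rewrite e0 e1; ring.
lra.
Qed.

(* [g + M s^2/2] and [M s^2/2 - g] have nondecreasing derivatives. *)
Lemma lipschitz_derive_conv_gap g (dg : R -> R) M th :
  (forall t : R, is_derive t (1 : R) g (dg t)) ->
  (forall s t, s <= t -> `|dg t - dg s| <= M * (t - s)) ->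
  0 <= th <= 1 ->
  `|th * g 1 + (1 - th) * g 0 - g th| <= M / 2 * (th * (1 - th)).
Proof.
move=> gd dg_lip th01.
set q := fun x : R => M / 2 * (x * x).
have up := @nondecr_derive_le_conv (g + q) (fun t => dg t + M * t) th
  (fun t => is_deriveD (gd t) (is_derive_half_sqr M t)).
have lo := @nondecr_derive_le_conv (q - g) (fun t => M * t - dg t) th
  (fun t => is_deriveB (is_derive_half_sqr M t) (gd t)).
have lip_split s t : s <= t -> dg s + M * s <= dg t + M * t /\ M * s - dg s <= M * t - dg t.
  by move=> st; move: (dg_lip s t st); rewrite ler_norml => /andP[]; lra.
have {}up := up (fun s t st => proj1 (lip_split s t st)) th01.
have {}lo := lo (fun s t st => proj2 (lip_split s t st)) th01.
move: up lo; rewrite /q !fctE ler_norml !mulr1 !mulr0 !addr0 !sub0r => up lo.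
by apply/andP; split; lra.
Qed.
End RealLine.

Section Plane.
Variable R : realType.
Implicit Types (u v w x p r : 'cV[R]_2) (H : 'M[R]_2) (a b c th L : R).

Lemma sum2 (F : 'I_2 -> R) : \sum_(i < 2) F i = F 0 + F 1.
Proof. by rewrite big_ord_recl big_ord1; congr (_ + F _); apply: val_inj. Qed.

Lemma ord2P (i : 'I_2) : i = 0 \/ i = 1.
Proof. by case: i => [[|[|//]] Hi]; [left|right]; apply: val_inj. Qed.

Lemma dotvE u v : dotv u v = u 0 0 * v 0 0 + u 1 0 * v 1 0.
Proof. exact: sum2. Qed.

Lemma dotv_ge0 u : 0 <= dotv u u.
Proof. by rewrite dotvE -!expr2 addr_ge0 ?sqr_ge0. Qed.

Lemma dotvBl u v w : dotv (u - v) w = dotv u w - dotv v w.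
Proof. by rewrite !dotvE !mxE; ring. Qed.

Lemma enorm_mulss u : enorm u * enorm u = dotv u u.
Proof. by rewrite /enorm -expr2 sqr_sqrtr // dotv_ge0. Qed.

Lemma enormZ c u : enorm (c *: u) = `|c| * enorm u.
Proof.
rewrite /enorm (_ : dotv _ _ = c ^+ 2 * dotv u u); last by rewrite !dotvE !mxE; ring.
by rewrite sqrtrM ?sqrtr_sqr // sqr_ge0.
Qed.

Lemma dotv_le_enorm u v : `|dotv u v| <= enorm u * enorm v.
Proof.
rewrite /enorm -sqrtrM ?dotv_ge0 // -sqrtr_sqr; apply: ler_wsqrtr.
rewrite !dotvE; have := sqr_ge0 (u 0 0 * v 1 0 - u 1 0 * v 0 0); nra.
Qed.

Lemma diff_dotv_grad (f : 'cV[R]_2 -> R) x w : 'd f x w = dotv (grad f x) w.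
Proof.
have wE : w = w 0 0 *: delta_mx 0 0 + w 1 0 *: delta_mx 1 0.
  apply/matrixP => i j; rewrite !mxE (ord1 j).
  by case: (ord2P i) => -> /=; rewrite ?mulr1 ?mulr0 ?addr0 ?add0r.
rewrite {1}wE linearD !linearZ dotvE /grad !mxE.
by rewrite /GRing.scale /= mulrC [X in _ + X]mulrC.
Qed.

Lemma is_derive_line (f : 'cV[R]_2 -> R) r w (t : R) :
  differentiable f (r + t *: w) ->
  is_derive t (1 : R) (fun s : R => f (r + s *: w)) ('d f (r + t *: w) w).
Proof.
move=> df.
have quotE : (fun h : R => h^-1 *: (((fun s : R => f (r + s *: w)) \o shift t) (h *: (1 : R))
                                   - f (r + t *: w)))
           = (fun h : R => h^-1 *: ((f \o shift (r + t *: w)) (h *: w) - f (r + t *: w))).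
  apply: funext => h /=.
  by rewrite [h%:A]mulr1 scalerDl addrCA.
have dv : derivable (fun s : R => f (r + s *: w)) t 1.
  by rewrite /derivable quotE; apply: diff_derivable.
by apply: DeriveDef => //; rewrite -deriveE // /derive quotE.
Qed.

Definition interp_gap (g : 'cV[R]_2 -> R) p r th : R :=
  th * g p + (1 - th) * g r - g (r + th *: (p - r)).

Lemma interp_gap_C11 (L : R) (f : 'cV[R]_2 -> R) p r th :
  C11 L f -> 0 <= th <= 1 ->
  `|interp_gap f p r th| <= L * dotv (p - r) (p - r) / 2 * (th * (1 - th)).
Proof.
move=> [fd f_lip] th01; set w := p - r.
have hd (t : R) : is_derive t (1 : R) (fun s : R => f (r + s *: w))
                    (dotv (grad f (r + t *: w)) w).
  by apply: is_derive_eq; [apply: is_derive_line | apply: diff_dotv_grad].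
have hl (s t : R) : s <= t ->
    `|dotv (grad f (r + t *: w)) w - dotv (grad f (r + s *: w)) w|
      <= L * dotv w w * (t - s).
  move=> st; rewrite -dotvBl; apply: le_trans (dotv_le_enorm _ _) _.
  have := f_lip (r + t *: w) (r + s *: w).
  have -> : r + t *: w - (r + s *: w) = (t - s) *: w.
    by apply/matrixP => i j; rewrite !mxE; ring.
  rewrite enormZ ger0_norm ?subr_ge0 // -enorm_mulss.
  move=> /(ler_wpM2r (sqrtr_ge0 (dotv w w))); rewrite -/(enorm w).
  by rewrite (_ : L * (enorm w * enorm w) * (t - s) = L * ((t - s) * enorm w) * enorm w) //; ring.
have := lipschitz_derive_conv_gap hd hl th01.
by rewrite /interp_gap scale1r scale0r addr0 /w [r + _]addrC subrK.
Qed.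

Definition qform H x : R := (x^T *m H *m x) 0 0.

Lemma frobDl A B H : frob (A + B) H = frob A H + frob B H.
Proof.
rewrite /frob -big_split; apply: eq_bigr => i _.
by rewrite -big_split; apply: eq_bigr => j _; rewrite mxE mulrDl.
Qed.

Lemma frobZl c A H : frob (c *: A) H = c * frob A H.
Proof.
rewrite /frob mulr_sumr; apply: eq_bigr => i _.
by rewrite mulr_sumr; apply: eq_bigr => j _; rewrite mxE mulrA.
Qed.

Lemma frob_outer x H : frob (x *m x^T) H = qform H x.
Proof. by rewrite /frob /qform !(sum2, big_ord1, mxE); ring. Qed.

Lemma qform_interp_gap H p r th :
  interp_gap (qform H) p r th = th * (1 - th) * qform H (p - r).
Proof. by rewrite /interp_gap /qform !(sum2, mxE); ring. Qed.

Lemma qform_eigen H x a : H *m x = a *: x -> qform H x = a * dotv x x.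
Proof.
move=> Hx; rewrite /qform -mulmxA Hx -scalemxAr mxE; congr (_ * _).
by rewrite mxE; apply: eq_bigr => i _; rewrite mxE.
Qed.

Definition lin_indep u v : Prop :=
  forall a b, a *: u + b *: v = 0 -> a = 0 /\ b = 0.

Lemma lin_indep_det_neq0 u v :
  lin_indep u v -> u 0 0 * v 1 0 - v 0 0 * u 1 0 != 0.
Proof.
move=> indep; apply/eqP => d0.
have [v0 u0] : v 0 0 = 0 /\ - u 0 0 = 0.
  by apply: indep; apply/matrixP => i j; rewrite !mxE (ord1 j); case: (ord2P i) => -> /=; lra.
have [v1 u1] : v 1 0 = 0 /\ - u 1 0 = 0.
  by apply: indep; apply/matrixP => i j; rewrite !mxE (ord1 j); case: (ord2P i) => -> /=; lra.
have [] : (1 : R) = 0 /\ (0 : R) = 0.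
  by apply: indep; apply/matrixP => i j; rewrite !mxE (ord1 j); case: (ord2P i) => -> /=; lra.
by move/eqP; rewrite oner_eq0.
Qed.

Lemma mx_cols_unitmx u v : lin_indep u v -> mx_cols u v \in unitmx.
Proof.
move=> /lin_indep_det_neq0 d0.
pose K : 'M[R]_2 := (u 0 0 * v 1 0 - v 0 0 * u 1 0)^-1 *: \matrix_(i < 2, j < 2)
  (if i == 0 then (if j == 0 then v 1 0 else - v 0 0)
   else (if j == 0 then - u 1 0 else u 0 0)).
suff /mulmx1_unit[] : mx_cols u v *m K = 1%:M by [].
apply/matrixP => i j; rewrite !mxE sum2 !mxE.
by case: (ord2P i) => ->; case: (ord2P j) => -> /=; field.
Qed.

Definition diag2 a b : 'M[R]_2 :=
  \matrix_(i < 2, j < 2) (if i == j then (if i == 0 then a else b) else 0).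

Lemma mx_cols_delta u v :
  mx_cols u v *m delta_mx 0 0 = u /\ mx_cols u v *m delta_mx 1 0 = v :> 'cV[R]_2.
Proof.
by split; apply/matrixP => i j; rewrite !mxE sum2 !mxE (ord1 j) /=; ring.
Qed.

Lemma diag2_delta a b :
  diag2 a b *m delta_mx 0 0 = a *: (delta_mx 0 0 : 'cV[R]_2) /\
  diag2 a b *m delta_mx 1 0 = b *: (delta_mx 1 0 : 'cV[R]_2).
Proof.
by split; apply/matrixP => i j; rewrite !mxE sum2 !mxE (ord1 j);
  case: (ord2P i) => -> /=; ring.
Qed.

Lemma conj_diag2_eigen u v a b :
  let P := mx_cols u v in P \in unitmx ->
  (P *m diag2 a b *m invmx P) *m u = a *: u /\
  (P *m diag2 a b *m invmx P) *m v = b *: v.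
Proof.
move=> P Pu; have [De0 De1] := diag2_delta a b.
have [Pe0 Pe1] : P *m delta_mx 0 0 = u /\ P *m delta_mx 1 0 = v := mx_cols_delta u v.
split; [rewrite -[in LHS]Pe0 -Pe0 | rewrite -[in LHS]Pe1 -Pe1];
  by rewrite -!mulmxA mulKmx // ?De0 ?De1 -scalemxAr.
Qed.

Section Barycentric.
Variables (l1 l2 l3 : R) (y0 y1 y2 y3 : 'cV[R]_2).
Hypothesis l_sum : l1 + l2 + l3 = 1.
Hypothesis y0_bary : l1 *: y1 + l2 *: y2 + l3 *: y3 = y0.
Hypotheses (l1_neq0 : l1 != 0) (l13_neq0 : l1 + l3 != 0).

Let l2E : l2 = 1 - l1 - l3. Proof. by rewrite -l_sum; ring. Qed.

Definition bary_meet : 'cV[R]_2 := (l1 + l3)^-1 *: (l1 *: y1 + l3 *: y3).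

Lemma y0_on_meet_y2 : y0 = bary_meet + l2 *: (y2 - bary_meet).
Proof.
by apply/matrixP => i j; rewrite -y0_bary /bary_meet !mxE l2E; field; rewrite ?l13_neq0.
Qed.

Lemma y1_on_y3_meet : y1 = y3 + ((l1 + l3) / l1) *: (bary_meet - y3).
Proof.
by apply/matrixP => i j; rewrite /bary_meet !mxE; field; rewrite ?l1_neq0 ?l13_neq0.
Qed.

Lemma bary_gap_split (g : 'cV[R]_2 -> R) :
  l1 * g y1 + l2 * g y2 + l3 * g y3 - g y0
  = interp_gap g y2 bary_meet l2 - l1 * interp_gap g bary_meet y3 ((l1 + l3) / l1).
Proof.
rewrite /interp_gap -y0_on_meet_y2 -y1_on_y3_meet l2E.
by field; rewrite ?l1_neq0 ?l13_neq0.
Qed.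

Lemma y2_sub_meet : y2 - bary_meet = (l1 + l3)^-1 *: (y2 - y0).
Proof.
apply/matrixP => i j; rewrite -y0_bary /bary_meet !mxE l2E.
by field; rewrite ?l13_neq0.
Qed.

Lemma meet_sub_y3 : bary_meet - y3 = (l1 / (l1 + l3)) *: (y1 - y3).
Proof.
by apply/matrixP => i j; rewrite /bary_meet !mxE; field; rewrite ?l13_neq0.
Qed.

Lemma aff_indep_lin_indep_y2y0_y1y3 :
  aff_indep y1 y2 y3 -> lin_indep (y2 - y0) (y1 - y3).
Proof.
move=> indep a b ab0.
have [] : a * (l1 + l3) = 0 /\ - (a * l3) - b = 0.
  apply: indep; rewrite -ab0 -y0_bary; apply/matrixP => i j; rewrite !mxE l2E; ring.
move/eqP; rewrite mulf_eq0 (negPf l13_neq0) orbF => /eqP a0.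
by rewrite a0; lra.
Qed.
End Barycentric.

Lemma affine_barycentric (m : 'cV[R]_2 -> R) (l1 l2 l3 : R) (y1 y2 y3 : 'cV[R]_2) :
  is_affine m -> l1 + l2 + l3 = 1 ->
  m (l1 *: y1 + l2 *: y2 + l3 *: y3) = l1 * m y1 + l2 * m y2 + l3 * m y3.
Proof.
move=> [g [c mE]] l_sum; rewrite !mE !dotvE !mxE -[c in LHS]mul1r -l_sum; ring.
Qed.

Lemma obtuse_barycentric_gt0 (y1 y2 y3 : 'cV[R]_2) (l1 l3 : R) :
  dotv (y2 - y1) (y3 - y1) < 0 -> l3 < 0 ->
  l1 * dotv (y2 - y1) (y3 - y1) - l3 * dotv (y2 - y3) (y1 - y3) < 0 ->
  0 < l1 + l3.
Proof.
have -> : dotv (y2 - y3) (y1 - y3) = dotv (y3 - y1) (y3 - y1) - dotv (y2 - y1) (y3 - y1).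
  by rewrite !dotvE !mxE; ring.
have := dotv_ge0 (y3 - y1); nra.
Qed.

Lemma frob_Gmx (l1 l2 l3 : R) (y0 y1 y2 y3 : 'cV[R]_2) H :
  frob (Gmx l1 l2 l3 y0 y1 y2 y3) H
  = l1 * qform H y1 + l2 * qform H y2 + l3 * qform H y3 - qform H y0.
Proof. by rewrite /Gmx !frobDl !frobZl !frob_outer; ring. Qed.

Lemma Hstar_eigen L (y0 y1 y2 y3 : 'cV[R]_2) :
  lin_indep (y2 - y0) (y1 - y3) ->
  Hstar L y0 y1 y2 y3 *m (y2 - y0) = L *: (y2 - y0) /\
  Hstar L y0 y1 y2 y3 *m (y1 - y3) = - L *: (y1 - y3).
Proof. by move/mx_cols_unitmx/conj_diag2_eigen; apply. Qed.

Lemma qform_eigenZ H x a c :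
  H *m x = a *: x -> qform H (c *: x) = a * dotv (c *: x) (c *: x).
Proof. by move=> Hx; apply: qform_eigen; rewrite -scalemxAr Hx !scalerA mulrC. Qed.
End Plane.

Theorem theorem5p3 (R : realType) (L : R) (f : 'cV[R]_2 -> R)
  (y0 y1 y2 y3 : 'cV[R]_2) (m : 'cV[R]_2 -> R) (l1 l2 l3 : R) :
  0 < L ->
  C11 L f ->
  aff_indep y1 y2 y3 ->
  dotv (y2 - y1) (y3 - y1) < 0 ->
  is_affine m -> m y1 = f y1 -> m y2 = f y2 -> m y3 = f y3 ->
  l1 + l2 + l3 = 1 -> l1 *: y1 + l2 *: y2 + l3 *: y3 = y0 ->
  0 < l2 -> l3 < 0 ->
  l1 * dotv (y2 - y1) (y3 - y1) - l3 * dotv (y2 - y3) (y1 - y3) < 0 ->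
  `|m y0 - f y0| <= 2^-1 * frob (Gmx l1 l2 l3 y0 y1 y2 y3) (Hstar L y0 y1 y2 y3).
Proof.
move=> _ fC aff obtuse m_aff m1 m2 m3 l_sum y0_bary l2_gt0 l3_lt0 l_obtuse.
have l13_gt0 := obtuse_barycentric_gt0 obtuse l3_lt0 l_obtuse.
have l1_gt0 : 0 < l1 by lra.
have l1_neq0 : l1 != 0 by rewrite gt_eqF.
have l13_neq0 : l1 + l3 != 0 by rewrite gt_eqF.
have split g := bary_gap_split l_sum y0_bary l1_neq0 l13_neq0 g.
have -> : m y0 = l1 * f y1 + l2 * f y2 + l3 * f y3.
  by rewrite -y0_bary affine_barycentric // m1 m2 m3.
rewrite split frob_Gmx split !qform_interp_gap.
have [H20 H13] := Hstar_eigen L (aff_indep_lin_indep_y2y0_y1y3 l_sum y0_bary l13_neq0 aff).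
set z := bary_meet l1 l3 y1 y3; set t := (l1 + l3) / l1.
have -> : qform (Hstar L y0 y1 y2 y3) (y2 - z) = L * dotv (y2 - z) (y2 - z).
  by rewrite (y2_sub_meet l_sum y0_bary) //; apply: qform_eigenZ.
have -> : qform (Hstar L y0 y1 y2 y3) (z - y3) = - L * dotv (z - y3) (z - y3).
  by rewrite meet_sub_y3 //; apply: qform_eigenZ.
have l2_01 : 0 <= l2 <= 1 by apply/andP; split; lra.
have t_01 : 0 <= t <= 1.
  by rewrite /t divr_ge0 ?(ltW l13_gt0) ?(ltW l1_gt0) //= ler_pdivrMr // mul1r; lra.
have gapA := interp_gap_C11 y2 z fC l2_01.
have gapB := ler_wpM2l (ltW l1_gt0) (interp_gap_C11 z y3 fC t_01).
apply: le_trans (ler_normB _ _) _; rewrite normrM gtr0_norm //.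
apply: le_trans (lerD gapA gapB) _.
by rewrite le_eqVlt; apply/orP; left; apply/eqP; ring.
Qed.
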